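(* Consider the averaged boost converter $-L\dot I=(1-u)V-V_s$, $C\dot V=(1-u)I-GV$ with scalar constants $L>0$, $C>0$, $G\ge0$, $V_s\in\mathbb{R}$, extended by $\dot u=\upsilon$ (state $(I,V,\dot I,\dot V,u)$, input $\upsilon$). Then this system is passive with respect to the storage function $S=\tfrac12L\dot I^2+\tfrac12C\dot V^2$ and the port-variables $\dot u$ and $\dot IV-\dot VI$, i.e. $\dot S\le\dot u(\dot IV-\dot VI)$.
   Context: $I$ is the inductor current, $V$ the capacitor voltage, $u\in[0,1]$ the duty cycle (averaged model). *)

From Stdlib Require Import Reals.
From Coquelicot Require Import Coquelicot.
Open Scope R_scope.

Definition storage (L C : R) (dI dV : R -> R) (t : R) : R :=
  1/2 * L * (dI t)^2 + 1/2 * C * (dV t)^2.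

From Stdlib Require Import Reals Lra.
From Coquelicot Require Import Coquelicot.
Open Scope R_scope.

(* The dynamics express [dI] and [dV] as differentiable functions of [I], [V]
   and [u], so [S] can be differentiated.  Along trajectories the cross terms
   [(1 - u) dI dV] cancel in [S' = L dI dI' + C dV dV'], leaving
   [S' = ups (dI V - dV I) - G dV^2], and the dissipated power [G dV^2] is
   nonnegative. *)

Lemma is_derive_storage (L C : R) (f g : R -> R) (t df dg : R) :
  is_derive f t df -> is_derive g t dg ->
  is_derive (storage L C f g) t (L * f t * df + C * g t * dg).
Proof.
  intros Hf Hg. unfold storage.
  auto_derive.
  - split; [exists df; exact Hf | split; [exists dg; exact Hg | exact I]].
  - replace (Derive (fun x => f x) t) with df by (symmetry; apply is_derive_unique; exact Hf).
    replace (Derive (fun x => g x) t) with dg by (symmetry; apply is_derive_unique; exact Hg).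
    field.
Qed.

Section BoostConverter.

Variables (L C G Vs : R) (I V u dI dV ups : R -> R).
Hypotheses (HL : 0 < L) (HC : 0 < C).
Hypotheses (HI : forall t, is_derive I t (dI t))
  (HV : forall t, is_derive V t (dV t))
  (Hu : forall t, is_derive u t (ups t)).
Hypotheses (EI : forall t, - L * dI t = (1 - u t) * V t - Vs)
  (EV : forall t, C * dV t = (1 - u t) * I t - G * V t).

Lemma is_derive_current_rate (t : R) :
  is_derive dI t ((ups t * V t - (1 - u t) * dV t) / L).
Proof.
  assert (current_rate : forall s, (Vs - (1 - u s) * V s) / L = dI s).
  { intros s. replace (Vs - (1 - u s) * V s) with (L * dI s) by (pose proof (EI s); lra).
    field. lra. }
  apply (is_derive_ext _ _ _ _ current_rate).
  auto_derive.
  - split; [exists (ups t); apply Hu | split; [exists (dV t); apply HV | exact Logic.I]].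
  - replace (Derive (fun x => u x) t) with (ups t) by (symmetry; apply is_derive_unique; apply Hu).
    replace (Derive (fun x => V x) t) with (dV t) by (symmetry; apply is_derive_unique; apply HV).
    field. lra.
Qed.

Lemma is_derive_voltage_rate (t : R) :
  is_derive dV t ((- ups t * I t + (1 - u t) * dI t - G * dV t) / C).
Proof.
  assert (voltage_rate : forall s, ((1 - u s) * I s - G * V s) / C = dV s).
  { intros s. rewrite <- EV. field. lra. }
  apply (is_derive_ext _ _ _ _ voltage_rate).
  auto_derive.
  - repeat split; [exists (ups t); apply Hu | exists (dI t); apply HI | exists (dV t); apply HV].
  - replace (Derive (fun x => u x) t) with (ups t) by (symmetry; apply is_derive_unique; apply Hu).
    replace (Derive (fun x => I x) t) with (dI t) by (symmetry; apply is_derive_unique; apply HI).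
    replace (Derive (fun x => V x) t) with (dV t) by (symmetry; apply is_derive_unique; apply HV).
    field. lra.
Qed.

Lemma is_derive_storage_boost (t : R) :
  is_derive (storage L C dI dV) t
    (ups t * (dI t * V t - dV t * I t) - G * dV t ^ 2).
Proof.
  replace (ups t * (dI t * V t - dV t * I t) - G * dV t ^ 2) with
    (L * dI t * ((ups t * V t - (1 - u t) * dV t) / L)
     + C * dV t * ((- ups t * I t + (1 - u t) * dI t - G * dV t) / C))
    by (field; lra).
  apply is_derive_storage; [apply is_derive_current_rate | apply is_derive_voltage_rate].
Qed.

End BoostConverter.

Theorem lemma3 (L C G Vs : R) (HL : 0 < L) (HC : 0 < C) (HG : 0 <= G)
  (I V u dI dV ups : R -> R) :
  (forall t, is_derive I t (dI t)) ->
  (forall t, is_derive V t (dV t)) ->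
  (forall t, is_derive u t (ups t)) ->
  (forall t, - L * dI t = (1 - u t) * V t - Vs) ->
  (forall t, C * dV t = (1 - u t) * I t - G * V t) ->
  forall t, ex_derive (storage L C dI dV) t /\
    Derive (storage L C dI dV) t <= ups t * (dI t * V t - dV t * I t).
Proof.
  intros HI HV Hu EI EV t.
  pose proof (is_derive_storage_boost L C G Vs I V u dI dV ups HL HC HI HV Hu EI EV t)
    as Hstorage.
  split.
  - eexists; exact Hstorage.
  - rewrite (is_derive_unique _ _ _ Hstorage).
    assert (0 <= G * dV t ^ 2) by (apply Rmult_le_pos; [lra | apply pow2_ge_0]).
    lra.
Qed.
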